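(* Let $\mathcal F=\{f_1,\dots,f_M\}$ be a frame for $\mathbb R^N$ with range of coefficients $W\subset\mathbb R^M$. Then $\mathbb M^{\mathcal F}$ is injective if and only if for every subset $S\subset\{1,\dots,M\}$: whenever $W\cap L^S\neq\{0\}$, one has $W\cap L^{S^\complement}=\{0\}$.
   Context: A frame for $\mathbb R^N$ is a spanning family $\{f_1,\dots,f_M\}$; $W=\{(\langle x,f_k\rangle)_{k=1}^M: x\in\mathbb R^N\}$. For $S\subset\{1,\dots,M\}$, $L^S=\{(a_1,\dots,a_M)\in\mathbb R^M: a_i=0 \text{ for all } i\in S\}$, and $S^\complement$ is the complement of $S$. $\mathbb M^{\mathcal F}:\mathbb R^N/\{\pm1\}\to\mathbb R^M$, $\hat x\mapsto(|\langle x,f_k\rangle|)_k$; injectivity means $|\langle x,f_k\rangle|=|\langle y,f_k\rangle|$ for all $k$ implies $y=\pm x$. *)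

From HB Require Import structures.
From mathcomp Require Import all_boot all_order all_algebra.
From mathcomp Require Import reals.
Set Implicit Arguments. Unset Strict Implicit. Unset Printing Implicit Defensive.
Import Order.TTheory GRing.Theory Num.Theory.
Local Open Scope ring_scope.

(* A family f_1..f_M in R^N is encoded by the M x N matrix F whose k-th row is f_k.
   Vectors of R^N are row vectors 'rV[R]_N. *)

Definition inner (R : realType) (N : nat) (x y : 'rV[R]_N) : R :=
  \sum_(i < N) x 0 i * y 0 i.

(* The family is a frame: it spans R^N, i.e. the row space of F is all of R^N. *)
Definition is_frame (R : realType) (M N : nat) (F : 'M[R]_(M, N)) : Prop :=
  row_full F.

Definition coeffs (R : realType) (M N : nat) (F : 'M[R]_(M, N)) (x : 'rV[R]_N)
  : 'rV[R]_M := \row_(k < M) inner x (row k F).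

Definition inW (R : realType) (M N : nat) (F : 'M[R]_(M, N)) (a : 'rV[R]_M) : Prop :=
  exists x : 'rV[R]_N, a = coeffs F x.

Definition inL (R : realType) (M : nat) (S : {set 'I_M}) (a : 'rV[R]_M) : Prop :=
  forall i, i \in S -> a 0 i = 0.

Definition WL_nontrivial (R : realType) (M N : nat) (F : 'M[R]_(M, N))
  (S : {set 'I_M}) : Prop :=
  exists a : 'rV[R]_M, [/\ inW F a, inL S a & a != 0].

(* injectivity of the phaseless map x mod ±1 |-> (|<x,f_k>|)_k *)
Definition phase_retrievable (R : realType) (M N : nat) (F : 'M[R]_(M, N)) : Prop :=
  forall x y : 'rV[R]_N,
    (forall k : 'I_M, `|inner x (row k F)| = `|inner y (row k F)|) ->
    y = x \/ y = - x.

From HB Require Import structures.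
From mathcomp Require Import all_boot all_order all_algebra.
From mathcomp Require Import reals.
Set Implicit Arguments. Unset Strict Implicit. Unset Printing Implicit Defensive.
Import GRing.Theory Num.Theory.
Local Open Scope ring_scope.

(* |<x, f_k>| = |<y, f_k>| iff <x - y, f_k> = 0 or <x + y, f_k> = 0. So if x <> ±y,
   the coefficients of x - y and of x + y are nonzero vectors of W vanishing on
   complementary sets S and S^c. Conversely, if the coefficients of u lie in L^S
   and those of v in L^{S^c}, then u + v and u - v have coefficients of equal
   moduli, which forces u = 0 or v = 0. The analysis operator of a frame is
   injective, so vanishing coefficients mean a vanishing vector. *)

Lemma addrr_eq0 (R : numFieldType) (V : lmodType R) (v : V) :
  (v + v == 0) = (v == 0).
Proof. by rewrite -mulr2n -scaler_nat scaler_eq0 pnatr_eq0. Qed.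

Section Coefficients.
Variables (R : realType) (M N : nat) (F : 'M[R]_(M, N)).

Lemma coeffsE (x : 'rV[R]_N) : coeffs F x = x *m F^T.
Proof. by apply/rowP => k; rewrite !mxE; apply: eq_bigr => i _; rewrite !mxE. Qed.

Lemma coeffsD (x y : 'rV[R]_N) : coeffs F (x + y) = coeffs F x + coeffs F y.
Proof. by rewrite !coeffsE mulmxDl. Qed.

Lemma coeffsB (x y : 'rV[R]_N) : coeffs F (x - y) = coeffs F x - coeffs F y.
Proof. by rewrite !coeffsE mulmxBl. Qed.

Lemma frame_coeffs_inj : is_frame F -> injective (coeffs F).
Proof.
move=> frameF x y; rewrite !coeffsE; apply: row_free_inj.
by rewrite /row_free mxrank_tr.
Qed.

Lemma frame_coeffs_eq0 (x : 'rV[R]_N) :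
  is_frame F -> (coeffs F x == 0) = (x == 0).
Proof.
move=> frameF; have coeffs0 : coeffs F 0 = 0 by rewrite coeffsE mul0mx.
by rewrite -coeffs0 (inj_eq (frame_coeffs_inj frameF)).
Qed.

End Coefficients.

Section ComplementarySupports.
Variables (R : realType) (M : nat).

Lemma norm_eq_of_complementary_supports (S : {set 'I_M}) (a b : 'rV[R]_M) k :
  inL S a -> inL (~: S) b -> `|(a + b) 0 k| = `|(a - b) 0 k|.
Proof.
move=> aS bSc; rewrite !mxE.
have [kS | kNS] := boolP (k \in S); first by rewrite aS // add0r sub0r normrN.
by rewrite bSc ?inE // addr0 subr0.
Qed.

Lemma complementary_supports_of_norm_eq (a b : 'rV[R]_M) :
  (forall k, `|a 0 k| = `|b 0 k|) ->
  let S := [set k | (a - b) 0 k == 0] in inL S (a - b) /\ inL (~: S) (a + b).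
Proof.
move=> normE S; split => k; rewrite !inE; first by move/eqP.
rewrite !mxE; have /eqP := normE k; rewrite eqr_norm2 => /orP[|] /eqP ->.
  by rewrite subrr eqxx.
by rewrite addNr.
Qed.

End ComplementarySupports.

Theorem corollary2p4 (R : realType) (M N : nat) (F : 'M[R]_(M, N)) :
  is_frame F ->
  (phase_retrievable F <->
   (forall S : {set 'I_M}, WL_nontrivial F S -> ~ WL_nontrivial F (~: S))).
Proof.
move=> frameF; split.
- move=> retrievable S [_ [[u ->] uS u_nz]] [_ [[v ->] vSc v_nz]].
  have normE k : `|inner (u + v) (row k F)| = `|inner (u - v) (row k F)|.
    have := norm_eq_of_complementary_supports k uS vSc.
    by rewrite -coeffsD -coeffsB !mxE.
  rewrite !frame_coeffs_eq0 // in u_nz v_nz.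
  case: (retrievable _ _ normE) => [/addrI/eqP | /eqP].
    by rewrite eq_sym -subr_eq0 opprK addrr_eq0 (negPf v_nz).
  by rewrite opprD (inj_eq (addIr _)) -addr_eq0 addrr_eq0 (negPf u_nz).
- move=> no_complementary x y normE.
  have /complementary_supports_of_norm_eq[] : forall k,
      `|coeffs F x 0 k| = `|coeffs F y 0 k| by move=> k; rewrite !mxE.
  rewrite -coeffsB -coeffsD; set S := [set k | _] => xyS xyS'.
  have [|xy_nz] := boolP (coeffs F (x - y) == 0).
    by rewrite frame_coeffs_eq0 // subr_eq0 => /eqP->; left.
  have [|xy'_nz] := boolP (coeffs F (x + y) == 0).
    by rewrite frame_coeffs_eq0 // addr_eq0 => /eqP->; right; rewrite opprK.
  case: (no_complementary S).
    by exists (coeffs F (x - y)); split => //; exists (x - y).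
  by exists (coeffs F (x + y)); split => //; exists (x + y).
Qed.
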